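(* Let $\mathcal{X}$ be a finite set with $|\mathcal{X}|=n$, and let $s,t\ge 0$ be integers with $s+t\le n$. Generate random subsets $\mathcal{T},\mathcal{S}\subseteq\mathcal{X}$ as follows: (0) draw $\mathcal{L}\subseteq\mathcal{X}$ of size $t+s$ uniformly at random without replacement; (1) draw $\mathcal{T}\subseteq\mathcal{L}$ of size $t$ uniformly at random without replacement from $\mathcal{L}$; (2) draw an integer $i$ from the hypergeometric distribution with population size $n$, $t$ success states and $s$ draws, i.e. $\Pr\{i\}=\binom{t}{i}\binom{n-t}{s-i}/\binom{n}{s}$; (3) draw $i$ elements uniformly at random without replacement from $\mathcal{T}$; (4) draw $s-i$ elements uniformly at random without replacement from $\mathcal{L}\setminus\mathcal{T}$; (5) let $\mathcal{S}$ be the union of the elements drawn in steps (3) and (4). Then $\Pr\{\mathcal{T}=T\}=1/\binom{n}{t}$ for every $t$-subset $T\subseteq\mathcal{X}$, and $\Pr\{\mathcal{S}=S\mid\mathcal{T}=T\}=1/\binom{n}{s}$ for every $s$-subset $S$ and $t$-subset $T$ of $\mathcal{X}$; that is, $(\mathcal{T},\mathcal{S})$ has the same joint distribution as a pair of independent samples of sizes $t$ and $s$, each drawn uniformly at random without replacement from $\mathcal{X}$. *)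

From HB Require Import structures.
From mathcomp Require Import all_boot all_order all_algebra.
Set Implicit Arguments. Unset Strict Implicit. Unset Printing Implicit Defensive.
Import Order.TTheory GRing.Theory Num.Theory.
Local Open Scope ring_scope.

Definition unif_draw (X : finType) (A : {set X}) (k : nat) (B : {set X}) : rat :=
  if (B \subset A) && (#|B| == k) then ('C(#|A|, k)%:R)^-1 else 0.

Definition hypergeom (n t s i : nat) : rat :=
  ('C(t, i) * 'C(n - t, s - i))%:R / ('C(n, s))%:R.

(* Joint probability Pr{ T = T0, S = S0 } for the procedure (0)-(5). *)
Definition jointP (X : finType) (t s : nat) (T0 S0 : {set X}) : rat :=
  \sum_(L : {set X})
    unif_draw [set: X] (t + s) L * unif_draw L t T0 *
    \sum_(i < s.+1) hypergeom #|X| t s i *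
      \sum_(A : {set X}) \sum_(B : {set X})
        unif_draw T0 i A * unif_draw (L :\: T0) (s - i) B *
        (if S0 == A :|: B then 1 else 0).

Definition margT (X : finType) (t s : nat) (T0 : {set X}) : rat :=
  \sum_(S0 : {set X}) jointP t s T0 S0.

(* Fix T of size t and S of size s, and put m := |S \ T|.  In the joint
   probability the drawn pair (A, B) is forced to be (S ∩ T, S \ T), hence the
   hypergeometric index to be |S ∩ T| = s - m, and the layer L to be one of the
   C(n - t - m, s - m) sets of size t + s containing T ∪ S.  The identities
   C(n, t + s) C(t + s, t) = C(n, t) C(n - t, s) and
   C(n - t, s) C(s, m) = C(n - t, m) C(n - t - m, s - m) cancel everything
   down to Pr{T, S} = 1 / (C(n, t) C(n, s)), the law of two independent
   uniform draws; summing over S gives the marginal of T. *)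

From mathcomp Require Import all_boot all_order all_algebra.
From mathcomp Require Import ring zify.
Set Implicit Arguments. Unset Strict Implicit. Unset Printing Implicit Defensive.
Import Order.TTheory GRing.Theory Num.Theory.
Local Open Scope ring_scope.

Lemma bin_trinomial a b c : (b + c <= a)%N ->
  ('C(a, b + c) * 'C(b + c, b) = 'C(a, b) * 'C(a - b, c))%N.
Proof.
move=> h.
have hb : (b <= a)%N by apply: leq_trans h; apply: leq_addr.
have hc : (c <= a - b)%N by rewrite leq_subRL // addnC.
have F1 := bin_fact h; have F2 := bin_fact (leq_addr c b).
have F3 := bin_fact hb; have F4 := bin_fact hc.
rewrite addKn in F2; rewrite subnDA in F1.
apply/eqP; rewrite -(eqn_pmul2r (_ : 0 < b`! * (c`! * (a - b - c)`!))%N);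
  last by rewrite !muln_gt0 !fact_gt0.
apply/eqP; transitivity a`!.
  by rewrite -F1 -F2; ring.
by rewrite -F3 -F4; ring.
Qed.

Lemma bin_natr_neq0 a b : (b <= a)%N -> ('C(a, b)%:R : rat) != 0.
Proof. by move=> hab; rewrite pnatr_eq0 -lt0n bin_gt0. Qed.

Lemma hypergeom_weight n t s k m : (k + m)%N = s -> (k <= t)%N -> (s + t <= n)%N ->
  hypergeom n t s k * 'C(t, k)%:R^-1 *
    ('C(n - t - m, s - m)%:R / ('C(n, t + s) * 'C(t + s, t) * 'C(s, m))%:R)
  = ('C(n, t) * 'C(n, s))%:R^-1.
Proof.
move=> <- kt hst.
have E1 : 'C(n, t + (k + m))%:R * 'C(t + (k + m), t)%:R
          = 'C(n, t)%:R * 'C(n - t, k + m)%:R :> rat.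
  by rewrite -!natrM bin_trinomial // addnC.
have E2 : 'C(n - t, k + m)%:R * 'C(k + m, m)%:R
          = 'C(n - t, m)%:R * 'C(n - t - m, k)%:R :> rat.
  by rewrite -!natrM addnC bin_trinomial //; lia.
rewrite /hypergeom addnK addKn !natrM E1 -(mulrA 'C(n, t)%:R) E2.
by field; rewrite !bin_natr_neq0 //; lia.
Qed.

Section UniformDraws.
Variable X : finType.
Implicit Types A B L M S T : {set X}.

Lemma sum_indicator (P : pred {set X}) : \sum_L (P L)%:R = #|[set L | P L]|%:R :> rat.
Proof.
rewrite (eq_bigr (fun L => if P L then 1 else 0)); last by move=> L _; case: (P L).
by rewrite -big_mkcond /= sumr_const cardsE.
Qed.

Lemma unif_draw_eq0 A k B : #|B| != k -> unif_draw A k B = 0.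
Proof. by move=> hB; rewrite /unif_draw (negbTE hB) andbF. Qed.

Lemma unif_draw_out k A B : ~~ (B \subset A) -> unif_draw A k B = 0.
Proof. by move=> hB; rewrite /unif_draw (negbTE hB). Qed.

Lemma setU_eq_split A B S T : A \subset T -> [disjoint B & T] ->
  (S == A :|: B) = (A == S :&: T) && (B == S :\: T).
Proof.
move=> hA hB; apply/eqP/andP => [->|[/eqP -> /eqP ->]]; last by rewrite setID.
rewrite setIUl setDUl (setIidPl hA) (disjoint_setI0 hB) setU0.
by rewrite (setDidPl hB) (eqP (_ : A :\: T == set0)) ?set0U ?setD_eq0.
Qed.

Lemma sum_draws_union T M S i j : [disjoint M & T] ->
  \sum_A \sum_B unif_draw T i A * unif_draw M j B * (if S == A :|: B then 1 else 0)
  = unif_draw T i (S :&: T) * unif_draw M j (S :\: T).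
Proof.
move=> hM.
transitivity (\sum_A \sum_B (if A == S :&: T then unif_draw T i A else 0) *
                            (if B == S :\: T then unif_draw M j B else 0)).
  apply: eq_bigr => A _; apply: eq_bigr => B _.
  have [hA|hA] := boolP (A \subset T);
    last by rewrite (unif_draw_out i hA) if_same !mul0r.
  have [hB|hB] := boolP (B \subset M);
    last by rewrite (unif_draw_out j hB) if_same mulr0 mul0r mulr0.
  rewrite (setU_eq_split S hA (disjointWl hB hM)).
  by case: (A == _); case: (B == _); rewrite ?(mulr1, mulr0, mul0r).
by rewrite -big_distrlr /= -!big_mkcond !big_pred1_eq.
Qed.

Lemma sum_hypergeom_draws T M S s (w : nat -> rat) :
  \sum_(i < s.+1) w i * (unif_draw T i (S :&: T) * unif_draw M (s - i) (S :\: T))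
  = (#|S| == s)%:R *
    (w #|S :&: T| * (unif_draw T #|S :&: T| (S :&: T) * unif_draw M #|S :\: T| (S :\: T))).
Proof.
have cardS : #|S| = (#|S :&: T| + #|S :\: T|)%N by rewrite cardsID.
have [hS|hS] := boolP (#|S| == s).
  have hk : (#|S :&: T| < s.+1)%N by rewrite ltnS -(eqP hS) cardS leq_addr.
  rewrite mul1r (bigD1 (Ordinal hk)) //= big1 ?addr0.
    by rewrite -(eqP hS) cardS addKn.
  move=> i hi; rewrite unif_draw_eq0 ?mul0r ?mulr0 //.
  by apply: contra hi => /eqP e; apply/eqP/val_inj; rewrite /= e.
rewrite mul0r big1 // => i /= _.
have [/eqP hi|hi] := boolP (#|S :&: T| == i); last by rewrite unif_draw_eq0 ?mul0r ?mulr0.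
rewrite (unif_draw_eq0 M) ?mulr0 //; apply: contra hS => /eqP e.
by rewrite cardS hi e subnKC // -ltnS.
Qed.

Lemma draws_given_layer L T S t s : #|T| = t ->
  unif_draw [set: X] (t + s) L * unif_draw L t T * unif_draw (L :\: T) #|S :\: T| (S :\: T)
  = ((T :|: S \subset L) && (#|L| == t + s)%N)%:R /
    ('C(#|X|, t + s) * 'C(t + s, t) * 'C(s, #|S :\: T|))%:R.
Proof.
move=> hT; rewrite {1 2}/unif_draw subsetT cardsT hT !eqxx /= andbT.
have [hL|hL] := boolP (#|L| == t + s)%N; last by rewrite andbF !mul0r.
have [hTL|hTL] := boolP (T \subset L); last by rewrite subUset (negbTE hTL) mulr0 !mul0r.
have cardLT : #|L :\: T| = s by rewrite cardsD (setIidPr hTL) (eqP hL) hT addKn.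
have subLT : (S :\: T \subset L :\: T) = (S \subset L).
  by rewrite subsetD subDset (setUidPr hTL) disjoints_subset subsetDr andbT.
rewrite /unif_draw cardLT subLT eqxx andbT subUset hTL (eqP hL) /=.
by case: (S \subset L); rewrite ?mulr0 ?mul0r // !mul1r !natrM !invfM.
Qed.

Lemma card_supersets B a : (#|B| <= a <= #|X|)%N ->
  #|[set L : {set X} | (B \subset L) && (#|L| == a)]| = 'C(#|X| - #|B|, a - #|B|).
Proof.
case/andP=> hBa haX.
have cardC (L : {set X}) : #|~: L| = (#|X| - #|L|)%N by rewrite -(cardsC L) addKn.
(* Complementation maps these supersets onto the (n - a)-subsets of ~: B. *)
rewrite -(card_imset _ (@setC_inj X)).
have -> : (@setC X) @: [set L : {set X} | (B \subset L) && (#|L| == a)] =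
          [set A : {set X} | A \subset ~: B & #|A| == (#|X| - a)%N].
  apply/setP=> A; rewrite !inE; apply/imsetP/andP => [[L]|[hA /eqP hc]].
    by rewrite inE => /andP[hB /eqP hL] ->; rewrite setCS cardC hL; split.
  exists (~: A); last by rewrite setCK.
  by rewrite inE -setCS setCK hA cardC hc subKn // eqxx.
by rewrite cards_draws cardC -bin_sub; [congr 'C(_, _); lia | lia].
Qed.

Lemma jointP_draws T S t s : #|T| = t -> (s + t <= #|X|)%N ->
  jointP t s T S = (#|S| == s)%:R / ('C(#|X|, t) * 'C(#|X|, s))%:R.
Proof.
move=> hT hst; set k := #|S :&: T|; set m := #|S :\: T|.
have disjLT L : [disjoint L :\: T & T] by rewrite disjoints_subset subsetDr.
transitivity (\sum_L (#|S| == s)%:R * (hypergeom #|X| t s k * unif_draw T k (S :&: T)) *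
  (unif_draw [set: X] (t + s) L * unif_draw L t T * unif_draw (L :\: T) m (S :\: T))).
  apply: eq_bigr => L _.
  under eq_bigr => i _ do rewrite sum_draws_union //.
  by rewrite sum_hypergeom_draws; ring.
under eq_bigr => L _ do rewrite draws_given_layer //.
rewrite -big_distrr -big_distrl /= sum_indicator.
rewrite /unif_draw subsetIr hT eqxx /=.
have [hS|] := boolP (#|S| == s); last by rewrite !mul0r.
have cardS : (k + m)%N = s by rewrite cardsID (eqP hS).
have kt : (k <= t)%N by rewrite -hT subset_leq_card ?subsetIr.
have cardTS : #|T :|: S| = (t + m)%N.
  by rewrite cardsU hT setIC -/k (eqP hS) -cardS; lia.
rewrite card_supersets cardTS; last by apply/andP; split; lia.
by rewrite mul1r subnDA subnDl hypergeom_weight // mul1r.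
Qed.

Lemma margT_draws T t s : #|T| = t -> (s + t <= #|X|)%N ->
  margT t s T = 'C(#|X|, t)%:R^-1.
Proof.
move=> hT hst; rewrite /margT (eq_bigr _ (fun S _ => jointP_draws S hT hst)).
rewrite -big_distrl /= sum_indicator card_draws.
by rewrite natrM invfM mulrCA mulfV ?mulr1 // bin_natr_neq0 //; lia.
Qed.

End UniformDraws.

Theorem mainTheorem8 (X : finType) (n s t : nat) (hn : #|X| = n)
  (hst : (s + t <= n)%N) :
  forall T0 : {set X}, #|T0| = t ->
    margT t s T0 = ('C(n, t)%:R)^-1 /\
    (forall S0 : {set X}, #|S0| = s ->
       jointP t s T0 S0 / margT t s T0 = ('C(n, s)%:R)^-1).
Proof.
move=> T0 hT; subst n; have hmarg := margT_draws hT hst.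
split=> // S0 hS; rewrite hmarg jointP_draws // hS eqxx mul1r natrM.
by field; rewrite !bin_natr_neq0 //; lia.
Qed.
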